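(* Let $T$ be a triangle which is not of type $(108^\circ,36^\circ,36^\circ)$, $(72^\circ,72^\circ,36^\circ)$ or $(120^\circ,30^\circ,30^\circ)$. Then the tight 5-cycle $C_5$ with vertex set $[5]$ and edges $123,234,345,145,125$ is forbidden for $T$.
   Context: A 3-graph is a 3-uniform hypergraph; $G$ is $F$-free if it has no (not necessarily induced) subhypergraph isomorphic to $F$. A triangle is of type $(\alpha,\beta,\gamma)$ if $\alpha\ge\beta\ge\gamma$ are its interior angles in degrees. For a triangle $T$ with side lengths $a,b,c$ and $\varepsilon>0$, with $\varepsilon'=\varepsilon\min\{a,b,c\}$, a triangle $A'B'C'$ is $\varepsilon$-congruent to $T$ if there are $A,B,C\in\mathbb{R}^2$ with $ABC$ congruent to $T$ and $A',B',C'$ within distance $\varepsilon'$ of $A,B,C$ respectively. For finite $P\subseteq\mathbb{R}^2$, $\mathcal{H}(T,P,\varepsilon)$ is the 3-graph on $P$ whose edges are triples forming triangles $\varepsilon$-congruent to $T$. A 3-graph $H$ is forbidden for $T$ if there exists $\varepsilon>0$ such that for every $P\subseteq\mathbb{R}^2$ with $|P|=|V(H)|$, $\mathcal{H}(T,P,\varepsilon)$ is $H$-free. *)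

From Stdlib Require Import Reals Lra List.
Open Scope R_scope.

Definition point : Type := (R * R)%type.

Definition dist (p q : point) : R :=
  sqrt ((fst p - fst q) ^ 2 + (snd p - snd q) ^ 2).

Definition noncollinear (A B C : point) : Prop :=
  (fst B - fst A) * (snd C - snd A) - (snd B - snd A) * (fst C - fst A) <> 0.

Definition angle_deg (A B C : point) : R :=
  acos (((fst B - fst A) * (fst C - fst A) + (snd B - snd A) * (snd C - snd A))
        / (dist A B * dist A C)) * 180 / PI.

Definition is_type (A B C : point) (al be ga : R) : Prop :=
  let a := angle_deg A B C in
  let b := angle_deg B C A in
  let c := angle_deg C A B in
  (a = al /\ b = be /\ c = ga) \/ (a = al /\ b = ga /\ c = be) \/
  (a = be /\ b = al /\ c = ga) \/ (a = be /\ b = ga /\ c = al) \/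
  (a = ga /\ b = al /\ c = be) \/ (a = ga /\ b = be /\ c = al).

Definition eps_congruent (TA TB TC : point) (eps : R) (A' B' C' : point) : Prop :=
  let eps' := eps * Rmin (dist TB TC) (Rmin (dist TC TA) (dist TA TB)) in
  exists A B C : point,
    dist A B = dist TA TB /\ dist B C = dist TB TC /\ dist C A = dist TC TA /\
    dist A' A <= eps' /\ dist B' B <= eps' /\ dist C' C <= eps'.

Definition Hedge (TA TB TC : point) (eps : R) (x y z : point) : Prop :=
  x <> y /\ y <> z /\ x <> z /\
  (eps_congruent TA TB TC eps x y z \/ eps_congruent TA TB TC eps x z y \/
   eps_congruent TA TB TC eps y x z \/ eps_congruent TA TB TC eps y z x \/
   eps_congruent TA TB TC eps z x y \/ eps_congruent TA TB TC eps z y x).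

(* A 3-graph H on vertex set [n] = {1,...,n}, given by its list of edges. *)
Record hgraph3 := { hg_n : nat; hg_edges : list (nat * nat * nat) }.

Definition contains_copy (TA TB TC : point) (eps : R) (P : list point) (H : hgraph3) : Prop :=
  exists f : nat -> point,
    (forall i, (1 <= i <= hg_n H)%nat -> In (f i) P) /\
    (forall i j, (1 <= i <= hg_n H)%nat -> (1 <= j <= hg_n H)%nat -> f i = f j -> i = j) /\
    (forall i j k, In (i, j, k) (hg_edges H) -> Hedge TA TB TC eps (f i) (f j) (f k)).

Definition forbidden (TA TB TC : point) (H : hgraph3) : Prop :=
  exists eps : R, eps > 0 /\
    forall P : list point, NoDup P -> length P = hg_n H ->
      ~ contains_copy TA TB TC eps P H.

Definition C5 : hgraph3 :=
  {| hg_n := 5; hg_edges := (1,2,3)%nat :: (2,3,4)%nat :: (3,4,5)%nat :: (1,4,5)%nat :: (1,2,5)%nat :: nil |}.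

From Stdlib Require Import Reals Lra List Psatz.
From Stdlib Require Rgeom.
Import ListNotations.
Open Scope R_scope.

(** Suppose five points carry an approximate copy of C5. Rounding each of their
    ten mutual distances to the nearest side length of T gives labels under which
    every edge of C5 is a triangle with sides exactly a, b, c. For any four of the
    points the Cayley-Menger polynomial of the squared distances vanishes, since the
    points lie in a plane, so it is small for the squared labels. Conversely, a case
    analysis of the finitely many such labellings shows that the squares of the five
    four-point Cayley-Menger polynomials of the labels have a sum bounded below by a
    positive constant, unless T is isosceles with sides in golden ratio (then the
    regular pentagon or pentagram realises a labelling exactly). Hence for small eps
    no approximate copy exists. *)

Definition sqdist (p q : point) : R := (fst p - fst q) ^ 2 + (snd p - snd q) ^ 2.

Lemma dist_pow2 (p q : point) : dist p q ^ 2 = sqdist p q.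
Proof.
  apply pow2_sqrt; unfold sqdist.
  pose proof (pow2_ge_0 (fst p - fst q)); pose proof (pow2_ge_0 (snd p - snd q)); lra.
Qed.

Lemma dist_sym (p q : point) : dist p q = dist q p.
Proof. unfold dist; f_equal; ring. Qed.

Lemma dist_ge0 (p q : point) : 0 <= dist p q.
Proof. apply sqrt_pos. Qed.

Lemma dist_triangle (p q r : point) : dist p r <= dist p q + dist q r.
Proof.
  destruct p as [p1 p2], q as [q1 q2], r as [r1 r2].
  pose proof (Rgeom.triangle p1 p2 r1 r2 q1 q2) as H.
  unfold Rgeom.dist_euc, Rsqr in H; unfold dist; simpl.
  now rewrite !Rmult_1_r.
Qed.

Lemma dist_gt0 (p q : point) : p <> q -> 0 < dist p q.
Proof.
  intros Hpq. destruct (Rle_lt_or_eq_dec _ _ (dist_ge0 p q)) as [Hlt|H0]; [exact Hlt|].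
  exfalso; apply Hpq.
  pose proof (dist_pow2 p q) as Hsq; rewrite <- H0, pow_i in Hsq by lia; unfold sqdist in Hsq.
  destruct (Rplus_eq_0 _ _ (pow2_ge_0 _) (pow2_ge_0 _) (eq_sym Hsq)) as [H1 H2].
  rewrite <- Rsqr_pow2 in H1, H2; apply Rsqr_0_uniq in H1, H2.
  destruct p, q; simpl in *; f_equal; lra.
Qed.

Lemma noncollinear_sides_gt0 (A B C : point) : noncollinear A B C ->
  0 < dist A B /\ 0 < dist B C /\ 0 < dist C A.
Proof.
  unfold noncollinear; intros Hnc.
  repeat split; apply dist_gt0; intros ->; apply Hnc; ring.
Qed.

Lemma dist_perturb (x y A B : point) (e : R) :
  dist x A <= e -> dist y B <= e -> Rabs (dist x y - dist A B) <= 2 * e.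
Proof.
  intros HxA HyB.
  pose proof (dist_triangle x A y); pose proof (dist_triangle A B y).
  pose proof (dist_triangle A x B); pose proof (dist_triangle x y B).
  rewrite (dist_sym A x) in *; rewrite (dist_sym B y) in *.
  apply Rabs_le; lra.
Qed.

(** * The Cayley-Menger polynomial of four points *)

(* Euler: [cm4] is 144 times the squared volume of a tetrahedron with squared edge
   lengths [dij], so it vanishes on four coplanar points. *)
Definition cm4 (d12 d13 d14 d23 d24 d34 : R) : R :=
  d12 * d34 * (d13 + d14 + d23 + d24 - d12 - d34)
  + d13 * d24 * (d12 + d14 + d23 + d34 - d13 - d24)
  + d14 * d23 * (d12 + d13 + d24 + d34 - d14 - d23)
  - d12 * d13 * d23 - d12 * d14 * d24 - d13 * d14 * d34 - d23 * d24 * d34.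

Lemma cm4_planar (p1 p2 p3 p4 : point) :
  cm4 (sqdist p1 p2) (sqdist p1 p3) (sqdist p1 p4)
      (sqdist p2 p3) (sqdist p2 p4) (sqdist p3 p4) = 0.
Proof. unfold cm4, sqdist; ring. Qed.

Lemma Rabs_le_bounds (x b : R) : Rabs x <= b -> - b <= x <= b.
Proof. unfold Rabs; destruct Rcase_abs; lra. Qed.

Lemma Rabs_mult3_le (a b c A B C : R) :
  Rabs a <= A -> Rabs b <= B -> Rabs c <= C -> Rabs (a * b * c) <= A * B * C.
Proof.
  intros Ha Hb Hc; rewrite !Rabs_mult.
  pose proof (Rabs_pos a); pose proof (Rabs_pos b); pose proof (Rabs_pos c).
  apply Rmult_le_compat; try apply Rmult_le_compat; auto using Rmult_le_pos.
Qed.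

Lemma mult3_lipschitz (a b c a' b' c' A B C ha hb hc : R) :
  Rabs b <= B -> Rabs c <= C -> Rabs a' <= A -> Rabs b' <= B ->
  Rabs (a - a') <= ha -> Rabs (b - b') <= hb -> Rabs (c - c') <= hc ->
  Rabs (a * b * c - a' * b' * c') <= ha * B * C + A * hb * C + A * B * hc.
Proof.
  intros Hb Hc Ha' Hb' Da Db Dc.
  replace (a * b * c - a' * b' * c')
    with ((a - a') * b * c + a' * (b - b') * c + a' * b' * (c - c')) by ring.
  eapply Rle_trans; [apply Rabs_triang|].
  eapply Rle_trans; [apply Rplus_le_compat_r, Rabs_triang|].
  apply Rplus_le_compat; [apply Rplus_le_compat|]; apply Rabs_mult3_le; auto.
Qed.

Lemma sum4_sub2_le (a1 a2 a3 a4 a5 a6 M : R) :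
  Rabs a1 <= M -> Rabs a2 <= M -> Rabs a3 <= M ->
  Rabs a4 <= M -> Rabs a5 <= M -> Rabs a6 <= M ->
  Rabs (a3 + a4 + a5 + a6 - a1 - a2) <= 6 * M.
Proof.
  intros A1 A2 A3 A4 A5 A6.
  apply Rabs_le_bounds in A1, A2, A3, A4, A5, A6; apply Rabs_le; lra.
Qed.

Lemma sum4_sub2_lipschitz (a1 a2 a3 a4 a5 a6 b1 b2 b3 b4 b5 b6 h : R) :
  Rabs (a1 - b1) <= h -> Rabs (a2 - b2) <= h -> Rabs (a3 - b3) <= h ->
  Rabs (a4 - b4) <= h -> Rabs (a5 - b5) <= h -> Rabs (a6 - b6) <= h ->
  Rabs ((a3 + a4 + a5 + a6 - a1 - a2) - (b3 + b4 + b5 + b6 - b1 - b2)) <= 6 * h.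
Proof.
  intros E1 E2 E3 E4 E5 E6.
  apply Rabs_le_bounds in E1, E2, E3, E4, E5, E6; apply Rabs_le; lra.
Qed.

Lemma cm4_lipschitz (u1 u2 u3 u4 u5 u6 w1 w2 w3 w4 w5 w6 M h : R) :
  Rabs u1 <= M -> Rabs u2 <= M -> Rabs u3 <= M ->
  Rabs u4 <= M -> Rabs u5 <= M -> Rabs u6 <= M ->
  Rabs w1 <= M -> Rabs w2 <= M -> Rabs w3 <= M ->
  Rabs w4 <= M -> Rabs w5 <= M -> Rabs w6 <= M ->
  Rabs (u1 - w1) <= h -> Rabs (u2 - w2) <= h -> Rabs (u3 - w3) <= h ->
  Rabs (u4 - w4) <= h -> Rabs (u5 - w5) <= h -> Rabs (u6 - w6) <= h ->
  Rabs (cm4 u1 u2 u3 u4 u5 u6 - cm4 w1 w2 w3 w4 w5 w6) <= 66 * M ^ 2 * h.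
Proof.
  intros U1 U2 U3 U4 U5 U6 W1 W2 W3 W4 W5 W6 D1 D2 D3 D4 D5 D6.
  assert (T1 := mult3_lipschitz u1 u6 (u2 + u3 + u4 + u5 - u1 - u6)
                  w1 w6 (w2 + w3 + w4 + w5 - w1 - w6) M M (6 * M) h h (6 * h)).
  assert (T2 := mult3_lipschitz u2 u5 (u1 + u3 + u4 + u6 - u2 - u5)
                  w2 w5 (w1 + w3 + w4 + w6 - w2 - w5) M M (6 * M) h h (6 * h)).
  assert (T3 := mult3_lipschitz u3 u4 (u1 + u2 + u5 + u6 - u3 - u4)
                  w3 w4 (w1 + w2 + w5 + w6 - w3 - w4) M M (6 * M) h h (6 * h)).
  assert (F1 := mult3_lipschitz u1 u2 u4 w1 w2 w4 M M M h h h).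
  assert (F2 := mult3_lipschitz u1 u3 u5 w1 w3 w5 M M M h h h).
  assert (F3 := mult3_lipschitz u2 u3 u6 w2 w3 w6 M M M h h h).
  assert (F4 := mult3_lipschitz u4 u5 u6 w4 w5 w6 M M M h h h).
  specialize (T1 U6 ltac:(apply sum4_sub2_le; auto) W1 W6 D1 D6
                 ltac:(apply sum4_sub2_lipschitz; auto)).
  specialize (T2 U5 ltac:(apply sum4_sub2_le; auto) W2 W5 D2 D5
                 ltac:(apply sum4_sub2_lipschitz; auto)).
  specialize (T3 U4 ltac:(apply sum4_sub2_le; auto) W3 W4 D3 D4
                 ltac:(apply sum4_sub2_lipschitz; auto)).
  specialize (F1 U2 U4 W1 W2 D1 D2 D4).
  specialize (F2 U3 U5 W1 W3 D1 D3 D5).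
  specialize (F3 U3 U6 W2 W3 D2 D3 D6).
  specialize (F4 U5 U6 W4 W5 D4 D5 D6).
  apply Rabs_le_bounds in T1, T2, T3, F1, F2, F3, F4.
  apply Rabs_le; unfold cm4; split; lra.
Qed.

Definition cm4_at (d : nat -> nat -> R) (i j k l : nat) : R :=
  cm4 (d i j) (d i k) (d i l) (d j k) (d j l) (d k l).

Definition cm_sum (d : nat -> nat -> R) : R :=
  cm4_at d 1 2 3 4 ^ 2 + cm4_at d 1 2 3 5 ^ 2 + cm4_at d 1 2 4 5 ^ 2 +
  cm4_at d 1 3 4 5 ^ 2 + cm4_at d 2 3 4 5 ^ 2.

Definition approx_labels (p : nat -> point) (v : nat -> nat -> R) (e S : R) : Prop :=
  forall i j, (1 <= i < j)%nat -> (j <= 5)%nat ->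
    0 <= v i j /\ v i j + e <= S /\ Rabs (dist (p i) (p j) - v i j) <= e.

Lemma sq_close (d v e S : R) : 0 <= d -> 0 <= v -> v + e <= S -> Rabs (d - v) <= e ->
  Rabs (d ^ 2) <= S ^ 2 /\ Rabs (v ^ 2) <= S ^ 2 /\ Rabs (d ^ 2 - v ^ 2) <= 2 * S * e.
Proof.
  intros Hd Hv HS Hdv; apply Rabs_le_bounds in Hdv.
  repeat split; apply Rabs_le; split; nra.
Qed.

Lemma cm4_at_near_planar (p : nat -> point) (v : nat -> nat -> R) (e S : R) (i j k l : nat) :
  (1 <= i < j)%nat -> (j < k < l)%nat -> (l <= 5)%nat -> approx_labels p v e S ->
  cm4_at (fun a b => v a b ^ 2) i j k l ^ 2 <= (132 * S ^ 5 * e) ^ 2.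
Proof.
  intros Hij Hjk Hl Hv.
  destruct (Hv i j ltac:(lia) ltac:(lia)) as [v1 [S1 E1]],
    (Hv i k ltac:(lia) ltac:(lia)) as [v2 [S2 E2]],
    (Hv i l ltac:(lia) ltac:(lia)) as [v3 [S3 E3]],
    (Hv j k ltac:(lia) ltac:(lia)) as [v4 [S4 E4]],
    (Hv j l ltac:(lia) ltac:(lia)) as [v5 [S5 E5]],
    (Hv k l ltac:(lia) ltac:(lia)) as [v6 [S6 E6]].
  apply (sq_close _ _ _ S) in E1, E2, E3, E4, E5, E6; auto using dist_ge0.
  rewrite <- (pow2_abs (cm4_at _ _ _ _ _)); apply pow_incr; split; [apply Rabs_pos|].
  pose proof (cm4_planar (p i) (p j) (p k) (p l)) as Hplanar; rewrite <- !dist_pow2 in Hplanar.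
  unfold cm4_at; rewrite <- Rabs_Ropp, <- (Rplus_0_l (- _)), <- Hplanar.
  replace (132 * S ^ 5 * e) with (66 * (S ^ 2) ^ 2 * (2 * S * e)) by ring.
  apply cm4_lipschitz; tauto.
Qed.

Lemma cm_sum_near_planar (p : nat -> point) (v : nat -> nat -> R) (e S : R) :
  approx_labels p v e S -> cm_sum (fun a b => v a b ^ 2) <= 5 * (132 * S ^ 5 * e) ^ 2.
Proof.
  intros Hv; unfold cm_sum.
  pose proof (cm4_at_near_planar p v e S 1 2 3 4 ltac:(lia) ltac:(lia) ltac:(lia) Hv).
  pose proof (cm4_at_near_planar p v e S 1 2 3 5 ltac:(lia) ltac:(lia) ltac:(lia) Hv).
  pose proof (cm4_at_near_planar p v e S 1 2 4 5 ltac:(lia) ltac:(lia) ltac:(lia) Hv).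
  pose proof (cm4_at_near_planar p v e S 1 3 4 5 ltac:(lia) ltac:(lia) ltac:(lia) Hv).
  pose proof (cm4_at_near_planar p v e S 2 3 4 5 ltac:(lia) ltac:(lia) ltac:(lia) Hv).
  lra.
Qed.

Lemma approx_labels_intro (p : nat -> point) (v : nat -> nat -> R) (a b c e : R) :
  0 <= a -> 0 <= b -> 0 <= c -> e <= 1 ->
  (forall i j, (1 <= i < j)%nat -> (j <= 5)%nat ->
    In (v i j) [a; b; c] /\ Rabs (dist (p i) (p j) - v i j) <= e) ->
  approx_labels p v e (a + b + c + 1).
Proof.
  intros Ha Hb Hc He Hv i j Hij Hj; destruct (Hv i j Hij Hj) as [Hin Hclose].
  simpl in Hin; destruct Hin as [Hvij|[Hvij|[Hvij|[]]]]; rewrite <- Hvij in *;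
    repeat split; lra.
Qed.

Definition permutes3 (u v w a b c : R) : Prop :=
  (u = a /\ v = b /\ w = c) \/ (u = a /\ v = c /\ w = b) \/ (u = b /\ v = a /\ w = c) \/
  (u = b /\ v = c /\ w = a) \/ (u = c /\ v = a /\ w = b) \/ (u = c /\ v = b /\ w = a).

Lemma permutes3_in (u v w a b c : R) : permutes3 u v w a b c ->
  In u [a; b; c] /\ In v [a; b; c] /\ In w [a; b; c].
Proof. unfold permutes3; simpl; intuition (subst; tauto). Qed.

Lemma permutes3_iso (u v w s c : R) : permutes3 u v w s s c ->
  (u = c /\ v = s /\ w = s) \/ (u = s /\ v = c /\ w = s) \/ (u = s /\ v = s /\ w = c).
Proof. unfold permutes3; tauto. Qed.

Lemma permutes3_const (u v w s : R) : permutes3 u v w s s s -> u = s /\ v = s /\ w = s.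
Proof. unfold permutes3; tauto. Qed.

Definition c5_labelling (d : nat -> nat -> R) (x y z : R) : Prop :=
  forall i j k, In (i, j, k) (hg_edges C5) -> permutes3 (d i j) (d j k) (d i k) x y z.

Lemma c5_labelling_edges (d : nat -> nat -> R) (x y z : R) : c5_labelling d x y z ->
  permutes3 (d 1 2)%nat (d 2 3)%nat (d 1 3)%nat x y z /\
  permutes3 (d 2 3)%nat (d 3 4)%nat (d 2 4)%nat x y z /\
  permutes3 (d 3 4)%nat (d 4 5)%nat (d 3 5)%nat x y z /\
  permutes3 (d 1 4)%nat (d 4 5)%nat (d 1 5)%nat x y z /\
  permutes3 (d 1 2)%nat (d 2 5)%nat (d 1 5)%nat x y z.
Proof. intros Hd; repeat split; apply Hd; simpl; tauto. Qed.

Lemma c5_labelling_map (h : R -> R) (d : nat -> nat -> R) (x y z : R) :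
  c5_labelling d x y z -> c5_labelling (fun i j => h (d i j)) (h x) (h y) (h z).
Proof.
  intros Hd i j k Hijk; specialize (Hd i j k Hijk); unfold permutes3 in *.
  intuition (subst; tauto).
Qed.

Lemma c5_labelling_swap12 (d : nat -> nat -> R) (x y z : R) :
  c5_labelling d x y z -> c5_labelling d y x z.
Proof. intros Hd i j k Hijk; specialize (Hd i j k Hijk); unfold permutes3 in *; tauto. Qed.

Lemma c5_labelling_swap23 (d : nat -> nat -> R) (x y z : R) :
  c5_labelling d x y z -> c5_labelling d x z y.
Proof. intros Hd i j k Hijk; specialize (Hd i j k Hijk); unfold permutes3 in *; tauto. Qed.

(** * Approximate copies of C5 *)

Definition min_side (TA TB TC : point) : R :=
  Rmin (dist TB TC) (Rmin (dist TC TA) (dist TA TB)).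

Lemma eps_congruent_sides (TA TB TC : point) (eps : R) (x y z : point) :
  eps_congruent TA TB TC eps x y z ->
  let e := 2 * (eps * min_side TA TB TC) in
  Rabs (dist x y - dist TA TB) <= e /\ Rabs (dist y z - dist TB TC) <= e /\
  Rabs (dist z x - dist TC TA) <= e.
Proof.
  intros [A [B [C [HAB [HBC [HCA [Hx [Hy Hz]]]]]]]] e.
  rewrite <- HAB, <- HBC, <- HCA.
  repeat split; apply dist_perturb; assumption.
Qed.

Lemma Hedge_sides (TA TB TC : point) (eps : R) (x y z : point) :
  Hedge TA TB TC eps x y z ->
  let e := 2 * (eps * min_side TA TB TC) in
  exists L1 L2 L3, permutes3 L1 L2 L3 (dist TB TC) (dist TC TA) (dist TA TB) /\
    Rabs (dist x y - L1) <= e /\ Rabs (dist y z - L2) <= e /\ Rabs (dist x z - L3) <= e.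
Proof.
  intros [_ [_ [_ H]]] e; unfold permutes3.
  destruct H as [H|[H|[H|[H|[H|H]]]]]; apply eps_congruent_sides in H; fold e in H;
    rewrite ?(dist_sym z x), ?(dist_sym z y), ?(dist_sym y x) in H.
  - exists (dist TA TB), (dist TB TC), (dist TC TA); tauto.
  - exists (dist TC TA), (dist TB TC), (dist TA TB); tauto.
  - exists (dist TA TB), (dist TC TA), (dist TB TC); tauto.
  - exists (dist TC TA), (dist TA TB), (dist TB TC); tauto.
  - exists (dist TB TC), (dist TC TA), (dist TA TB); tauto.
  - exists (dist TB TC), (dist TA TB), (dist TC TA); tauto.
Qed.

Definition separated (a b c e : R) : Prop :=
  forall s t, In s [a; b; c] -> In t [a; b; c] -> s <> t -> 2 * e < Rabs (s - t).

Definition snap (a b c e d : R) : R :=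
  if Rle_dec (Rabs (d - a)) e then a else if Rle_dec (Rabs (d - b)) e then b else c.

Lemma separated_close_eq (a b c e d s t : R) : separated a b c e ->
  In s [a; b; c] -> In t [a; b; c] -> Rabs (d - s) <= e -> Rabs (d - t) <= e -> s = t.
Proof.
  intros Hsep Hs Ht Hds Hdt.
  destruct (Req_dec s t) as [|Hst]; [assumption|].
  specialize (Hsep s t Hs Ht Hst).
  apply Rabs_le_bounds in Hds, Hdt.
  assert (Rabs (s - t) <= 2 * e) by (apply Rabs_le; lra).
  lra.
Qed.

Lemma snap_eq (a b c e d L : R) : separated a b c e ->
  In L [a; b; c] -> Rabs (d - L) <= e -> snap a b c e d = L.
Proof.
  intros Hsep HL HdL; unfold snap.
  destruct (Rle_dec (Rabs (d - a)) e) as [Ha|Ha];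
    [|destruct (Rle_dec (Rabs (d - b)) e) as [Hb|Hb]].
  - apply (separated_close_eq a b c e d); simpl; auto.
  - apply (separated_close_eq a b c e d); simpl; auto.
  - simpl in HL; destruct HL as [<-|[<-|[<-|[]]]]; tauto.
Qed.

(* Since all labels come from the one function [snap], a pair lying in two edges gets
   the same label from both. *)
Lemma C5_copy_labelling (TA TB TC : point) (eps e : R) (f : nat -> point) :
  let a := dist TB TC in let b := dist TC TA in let c := dist TA TB in
  e = 2 * (eps * min_side TA TB TC) -> separated a b c e ->
  (forall i j k, In (i, j, k) (hg_edges C5) -> Hedge TA TB TC eps (f i) (f j) (f k)) ->
  exists v, c5_labelling v a b c /\
    forall i j, (1 <= i < j)%nat -> (j <= 5)%nat ->
      In (v i j) [a; b; c] /\ Rabs (dist (f i) (f j) - v i j) <= e.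
Proof.
  intros a b c He Hsep Hedges.
  set (v i j := snap a b c e (dist (f i) (f j))).
  assert (Hedge_snap : forall i j k, In (i, j, k) (hg_edges C5) ->
    permutes3 (v i j) (v j k) (v i k) a b c /\
    (In (v i j) [a; b; c] /\ Rabs (dist (f i) (f j) - v i j) <= e) /\
    (In (v j k) [a; b; c] /\ Rabs (dist (f j) (f k) - v j k) <= e) /\
    (In (v i k) [a; b; c] /\ Rabs (dist (f i) (f k) - v i k) <= e)).
  { intros i j k Hijk.
    destruct (Hedge_sides _ _ _ _ _ _ _ (Hedges i j k Hijk)) as [L1 [L2 [L3 [HL [H1 [H2 H3]]]]]].
    rewrite <- He in H1, H2, H3.
    destruct (permutes3_in _ _ _ _ _ _ HL) as [I1 [I2 I3]].
    unfold v; rewrite (snap_eq a b c e _ L1), (snap_eq a b c e _ L2), (snap_eq a b c e _ L3);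
      auto. }
  exists v; split; [intros i j k Hijk; apply Hedge_snap, Hijk|].
  intros i j Hij Hj.
  destruct i as [|[|[|[|[|i]]]]]; try lia; destruct j as [|[|[|[|[|[|j]]]]]]; try lia;
  let edge i j k := destruct (Hedge_snap i j k ltac:(simpl; tauto)) as [_ [? [? ?]]]; assumption in
  first [ edge 1%nat 2%nat 3%nat | edge 2%nat 3%nat 4%nat | edge 3%nat 4%nat 5%nat
        | edge 1%nat 4%nat 5%nat | edge 1%nat 2%nat 5%nat ].
Qed.

Lemma list_lower_bound (l : list R) :
  exists k, 0 < k /\ forall t, In t l -> 0 < t -> k <= t.
Proof.
  induction l as [|t l [k [Hk Hl]]].
  - exists 1; split; [lra | intros t []].
  - destruct (Rlt_dec 0 t) as [Ht|Ht].
    + exists (Rmin t k); split; [now apply Rmin_glb_lt|].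
      intros u [<-|Hu] Hu'; [apply Rmin_l | eapply Rle_trans; [apply Rmin_r | auto]].
    + exists k; split; [exact Hk|]; intros u [<-|Hu] Hu'; [lra | auto].
Qed.

Lemma exists_separation (a b c : R) :
  exists g, 0 < g /\ forall e, e <= g -> separated a b c e.
Proof.
  destruct (list_lower_bound [Rabs (a - b); Rabs (b - c); Rabs (a - c)]) as [k [Hk Hl]].
  exists (k / 4); split; [lra|]; intros e He s t Hs Ht Hst.
  enough (k <= Rabs (s - t)) by lra.
  apply Hl; [|apply Rabs_pos_lt; lra].
  simpl in Hs, Ht; destruct Hs as [<-|[<-|[<-|[]]]], Ht as [<-|[<-|[<-|[]]]];
    try congruence; simpl;
    rewrite ?(Rabs_minus_sym b a), ?(Rabs_minus_sym c b), ?(Rabs_minus_sym c a); tauto.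
Qed.

Lemma exists_small_tolerance (g K k : R) : 0 < g -> 0 <= K -> 0 < k ->
  exists e, 0 < e /\ e <= g /\ K * e ^ 2 < k.
Proof.
  intros Hg HK Hk.
  exists (Rmin g (Rmin 1 (k / (K + 1)))).
  set (e := Rmin g (Rmin 1 (k / (K + 1)))).
  assert (He : 0 < e) by (repeat apply Rmin_glb_lt; try apply Rdiv_lt_0_compat; lra).
  assert (He1 : e <= 1) by (eapply Rle_trans; [apply Rmin_r | apply Rmin_l]).
  assert (HeK : e * (K + 1) <= k).
  { replace k with (k / (K + 1) * (K + 1)) by (field; lra).
    apply Rmult_le_compat_r; [lra|].
    eapply Rle_trans; [apply Rmin_r | apply Rmin_r]. }
  split; [exact He | split; [apply Rmin_l | nra]].
Qed.

(** * Every such labelling is far from planar *)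

Definition c5_table (d12 d13 d14 d15 d23 d24 d25 d34 d35 d45 : R) (i j : nat) : R :=
  match i, j with
  | 1, 2 => d12 | 1, 3 => d13 | 1, 4 => d14 | 1, 5 => d15 | 2, 3 => d23
  | 2, 4 => d24 | 2, 5 => d25 | 3, 4 => d34 | 3, 5 => d35 | 4, 5 => d45
  | _, _ => 0
  end.

(* Pair {i, j} is a side of the pentagon 12345 if j = i + 1 or {i, j} = {1, 5}, and a
   diagonal otherwise; each side lies in two edges of C5 and each diagonal in one. Up
   to rotation and renaming of the lengths, a rainbow labelling puts x y x y z on the
   sides, and an isosceles (s, s, c) one puts 0, 1 or 2 non-adjacent bases c on the
   sides, the index of [iso_sum]; the diagonals are then forced. *)
Definition rainbow_sum (x y z : R) : R := cm_sum (c5_table x z x z y z y x z y).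
Definition iso_sum0 (s c : R) : R := cm_sum (c5_table s c c s s c c s c s).
Definition iso_sum1 (s c : R) : R := cm_sum (c5_table s c s c s c s s c s).
Definition iso_sum2 (s c : R) : R := cm_sum (c5_table s c s c s s s c s s).

Ltac destruct_permutes3 H :=
  destruct H as [[? [? ?]]|[[? [? ?]]|[[? [? ?]]|[[? [? ?]]|[[? [? ?]]|[? [? ?]]]]]]];
  subst; try (exfalso; congruence).

Ltac destruct_iso H :=
  destruct H as [[? [? ?]]|[[? [? ?]]|[? [? ?]]]]; subst; try (exfalso; congruence).

Ltac name_c5_values d :=
  set (d12 := d 1%nat 2%nat) in *; set (d13 := d 1%nat 3%nat) in *;
  set (d14 := d 1%nat 4%nat) in *; set (d15 := d 1%nat 5%nat) in *;
  set (d23 := d 2%nat 3%nat) in *; set (d24 := d 2%nat 4%nat) in *;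
  set (d25 := d 2%nat 5%nat) in *; set (d34 := d 3%nat 4%nat) in *;
  set (d35 := d 3%nat 5%nat) in *; set (d45 := d 4%nat 5%nat) in *;
  clearbody d12 d13 d14 d15 d23 d24 d25 d34 d35 d45.

Ltac in_by_ring :=
  simpl In; unfold cm_sum, cm4_at, c5_table, cm4;
  repeat (first [left; ring | right]).

Lemma c5_rainbow_sum (d : nat -> nat -> R) (x y z : R) :
  x <> y -> y <> z -> x <> z -> c5_labelling d x y z ->
  In (cm_sum d) [rainbow_sum x y z; rainbow_sum x z y; rainbow_sum y x z;
                 rainbow_sum y z x; rainbow_sum z x y; rainbow_sum z y x].
Proof.
  intros Hxy Hyz Hxz Hd.
  destruct (c5_labelling_edges _ _ _ _ Hd) as [E1 [E2 [E3 [E4 E5]]]].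
  clear Hd; unfold rainbow_sum, cm_sum at 1, cm4_at at 1 2 3 4 5; name_c5_values d.
  destruct_permutes3 E1; destruct_permutes3 E2; destruct_permutes3 E3;
  destruct_permutes3 E4; destruct_permutes3 E5; in_by_ring.
Qed.

Lemma c5_iso_sum (d : nat -> nat -> R) (s c : R) :
  s <> c -> c5_labelling d s s c ->
  In (cm_sum d) [iso_sum0 s c; iso_sum1 s c; iso_sum2 s c].
Proof.
  intros Hsc Hd.
  destruct (c5_labelling_edges _ _ _ _ Hd) as [E1 [E2 [E3 [E4 E5]]]].
  apply permutes3_iso in E1, E2, E3, E4, E5.
  clear Hd; unfold iso_sum0, iso_sum1, iso_sum2, cm_sum at 1, cm4_at at 1 2 3 4 5;
    name_c5_values d.
  destruct_iso E1; destruct_iso E2; destruct_iso E3; destruct_iso E4; destruct_iso E5;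
    in_by_ring.
Qed.

Lemma c5_equilateral_sum (d : nat -> nat -> R) (s : R) :
  c5_labelling d s s s -> cm_sum d = iso_sum0 s s.
Proof.
  intros Hd; destruct (c5_labelling_edges _ _ _ _ Hd) as [E1 [E2 [E3 [E4 E5]]]].
  apply permutes3_const in E1, E2, E3, E4, E5.
  unfold iso_sum0, cm_sum, cm4_at.
  destruct E1 as [-> [-> ->]], E2 as [_ [-> ->]], E3 as [_ [-> ->]], E4 as [-> [_ ->]],
    E5 as [_ [-> _]].
  reflexivity.
Qed.

(* For squared legs [s] and squared base [c] this says base/leg is the golden ratio or
   its inverse, i.e. the triangle is of type (108,36,36) or (72,72,36). *)
Definition golden (s c : R) : Prop := c ^ 2 - 3 * s * c + s ^ 2 = 0.

Lemma sum5_sq_pos (a b c d e : R) :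
  a <> 0 \/ b <> 0 \/ c <> 0 \/ d <> 0 \/ e <> 0 -> 0 < a ^ 2 + b ^ 2 + c ^ 2 + d ^ 2 + e ^ 2.
Proof.
  assert (Hpos : forall t, t <> 0 -> 0 < t ^ 2)
    by (intros; rewrite <- Rsqr_pow2; now apply Rsqr_pos_lt).
  pose proof (pow2_ge_0 a); pose proof (pow2_ge_0 b); pose proof (pow2_ge_0 c);
    pose proof (pow2_ge_0 d); pose proof (pow2_ge_0 e).
  intros [Ht|[Ht|[Ht|[Ht|Ht]]]]; apply Hpos in Ht; lra.
Qed.

Ltac unfold_c5_sum := unfold cm_sum, cm4_at; cbn [c5_table].

Lemma rainbow_sum_pos (x y z : R) : 0 < x -> 0 < y -> 0 < z -> 0 < rainbow_sum x y z.
Proof.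
  intros Hx Hy Hz; unfold rainbow_sum; unfold_c5_sum; apply sum5_sq_pos; right.
  replace (cm4 x z z y y z) with (- z * (z ^ 2 - 2 * y * z + y ^ 2 - x * z - 2 * x * y + x ^ 2))
    by (unfold cm4; ring).
  replace (cm4 z x z x z y) with (- z * (z ^ 2 - y * z + y ^ 2 - 2 * x * z - 2 * x * y + x ^ 2))
    by (unfold cm4; ring).
  destruct (Req_dec (z ^ 2 - 2 * y * z + y ^ 2 - x * z - 2 * x * y + x ^ 2) 0) as [H1|H1];
    [|left; apply Rmult_integral_contrapositive_currified; lra].
  destruct (Req_dec (z ^ 2 - y * z + y ^ 2 - 2 * x * z - 2 * x * y + x ^ 2) 0) as [H2|H2];
    [|right; right; left; apply Rmult_integral_contrapositive_currified; lra].
  assert (Hxy : y = x) by (apply (Rmult_eq_reg_l z); [|lra]; lra).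
  subst y.
  assert (Hzx : z = 3 * x) by (apply (Rmult_eq_reg_l z); [|lra]; lra).
  subst z; right; left.
  replace (cm4 x x (3 * x) (3 * x) x x) with (-18 * x ^ 3) by (unfold cm4; ring).
  apply Rmult_integral_contrapositive_currified; [lra | apply pow_nonzero; lra].
Qed.

Lemma iso_sum0_pos (s c : R) : 0 < s -> 0 < c -> ~ golden s c -> 0 < iso_sum0 s c.
Proof.
  intros Hs Hc Hg; unfold iso_sum0; unfold_c5_sum; apply sum5_sq_pos; left.
  replace (cm4 s c c s c s) with (- (c + s) * (c ^ 2 - 3 * s * c + s ^ 2))
    by (unfold cm4; ring).
  apply Rmult_integral_contrapositive_currified; [lra | exact Hg].
Qed.

Lemma iso_sum1_pos (s c : R) : 0 < s -> 0 < c -> 0 < iso_sum1 s c.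
Proof.
  intros Hs Hc; unfold iso_sum1; unfold_c5_sum; apply sum5_sq_pos.
  replace (cm4 s c s s c s) with (2 * c ^ 2 * (2 * s - c)) by (unfold cm4; ring).
  replace (cm4 s c c s s c) with (c ^ 2 * (3 * s - c)) by (unfold cm4; ring).
  destruct (Req_dec c (2 * s)) as [->|H2]; [right; left | left];
    repeat apply Rmult_integral_contrapositive_currified; try apply pow_nonzero; lra.
Qed.

Lemma iso_sum2_pos (s c : R) : 0 < s -> 0 < c -> 0 < iso_sum2 s c.
Proof.
  intros Hs Hc; unfold iso_sum2; unfold_c5_sum; apply sum5_sq_pos.
  replace (cm4 s s c s s s) with (s * c * (3 * s - c)) by (unfold cm4; ring).
  replace (cm4 s c s s s c) with (s * (4 * s * c - c ^ 2 - s ^ 2)) by (unfold cm4; ring).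
  destruct (Req_dec c (3 * s)) as [->|H3].
  - left; apply Rmult_integral_contrapositive_currified; [lra | intros H; nra].
  - right; right; left; repeat apply Rmult_integral_contrapositive_currified; lra.
Qed.

Lemma finite_values_lower_bound {A : Type} (P : A -> Prop) (g : A -> R) (l : list R) :
  Forall (fun t => 0 < t) l -> (forall a, P a -> In (g a) l) ->
  exists k, 0 < k /\ forall a, P a -> k <= g a.
Proof.
  intros Hpos Hin; destruct (list_lower_bound l) as [k [Hk Hl]].
  exists k; split; [exact Hk|]; intros a Ha.
  apply Hl; [|rewrite Forall_forall in Hpos; apply Hpos]; auto.
Qed.

Lemma cm_sum_lower_bound (x y z : R) : 0 < x -> 0 < y -> 0 < z ->
  (x = y -> ~ golden x z) -> (y = z -> ~ golden y x) -> (x = z -> ~ golden x y) ->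
  exists k, 0 < k /\ forall d, c5_labelling d x y z -> k <= cm_sum d.
Proof.
  intros Hx Hy Hz Gxy Gyz Gxz.
  assert (Hiso : forall s c (P : (nat -> nat -> R) -> Prop),
    0 < s -> 0 < c -> s <> c -> ~ golden s c -> (forall d, P d -> c5_labelling d s s c) ->
    exists k, 0 < k /\ forall d, P d -> k <= cm_sum d).
  { intros s c P Hs Hc Hsc Hg HP.
    apply (finite_values_lower_bound _ _ [iso_sum0 s c; iso_sum1 s c; iso_sum2 s c]).
    - repeat constructor; auto using iso_sum0_pos, iso_sum1_pos, iso_sum2_pos.
    - intros d Hd; apply c5_iso_sum; auto. }
  destruct (Req_dec x y) as [<-|Hxy]; [destruct (Req_dec x z) as [<-|Hxz]|].
  - exists (iso_sum0 x x); split; [apply iso_sum0_pos; auto|].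
    intros d Hd; rewrite (c5_equilateral_sum d x Hd); lra.
  - apply (Hiso x z); auto.
  - destruct (Req_dec y z) as [<-|Hyz]; [|destruct (Req_dec x z) as [<-|Hxz]].
    + apply (Hiso y x); auto; intros d Hd.
      now apply c5_labelling_swap23, c5_labelling_swap12.
    + apply (Hiso x y); auto; intros d Hd; now apply c5_labelling_swap23.
    + apply (finite_values_lower_bound _ _ [rainbow_sum x y z; rainbow_sum x z y;
        rainbow_sum y x z; rainbow_sum y z x; rainbow_sum z x y; rainbow_sum z y x]).
      * repeat constructor; apply rainbow_sum_pos; assumption.
      * intros d Hd; apply c5_rainbow_sum; assumption.
Qed.

(** * Golden isosceles triangles *)

Lemma angle_deg_eq (X Y Z : point) (t : R) :
  0 < dist X Y -> 0 < dist X Z -> 0 <= t <= 180 ->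
  (dist X Y ^ 2 + dist X Z ^ 2 - dist Y Z ^ 2) / (2 * dist X Y * dist X Z) =
    cos (t * PI / 180) ->
  angle_deg X Y Z = t.
Proof.
  intros HXY HXZ Ht Hcos; pose proof PI_RGT_0.
  unfold angle_deg.
  replace (_ / (dist X Y * dist X Z)) with (cos (t * PI / 180)).
  2: { rewrite <- Hcos, !dist_pow2; unfold sqdist; field; lra. }
  rewrite acos_cos; [field; lra|].
  split; [apply Rmult_le_pos; [apply Rmult_le_pos|]; lra|].
  apply (Rmult_le_reg_r 180); [lra|]; field_simplify; nra.
Qed.

Lemma pow2_sqrt5 : sqrt 5 ^ 2 = 5.
Proof. apply pow2_sqrt; lra. Qed.

Lemma sqrt5_gt2 : 2 < sqrt 5.
Proof. rewrite <- (sqrt_pow2 2) by lra; apply sqrt_lt_1_alt; lra. Qed.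

Lemma cos_PI5 : cos (PI / 5) = (1 + sqrt 5) / 4.
Proof.
  set (t := PI / 5).
  assert (Hcos3 : cos (3 * t) = - cos (2 * t)).
  { replace (3 * t) with (PI - 2 * t) by (unfold t; field). apply Rtrigo_facts.cos_pi_minus. }
  replace (3 * t) with (2 * t + t) in Hcos3 by ring.
  rewrite cos_plus, cos_2a_cos, sin_2a in Hcos3.
  pose proof (sin2_cos2 t) as Hsc; unfold Rsqr in Hsc.
  assert (Hpos : 0 < cos t) by (apply cos_gt_0; unfold t; pose proof PI_RGT_0; lra).
  pose proof pow2_sqrt5 as H5; pose proof sqrt5_gt2 as H5gt.
  assert (Hroot : (4 * cos t - 1 - sqrt 5) * (4 * cos t - 1 + sqrt 5) * (cos t + 1) = 0) by nra.
  destruct (Rmult_integral _ _ Hroot) as [Hr|Hr]; [|lra].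
  destruct (Rmult_integral _ _ Hr); lra.
Qed.

Lemma cos_2PI5 : cos (2 * PI / 5) = (sqrt 5 - 1) / 4.
Proof.
  replace (2 * PI / 5) with (2 * (PI / 5)) by field.
  rewrite cos_2a_cos, cos_PI5; pose proof pow2_sqrt5; nra.
Qed.

Lemma cos_3PI5 : cos (3 * PI / 5) = (1 - sqrt 5) / 4.
Proof.
  replace (3 * PI / 5) with (PI - 2 * PI / 5) by field.
  rewrite Rtrigo_facts.cos_pi_minus, cos_2PI5; lra.
Qed.

Lemma golden_cosines (s c : R) : 0 < s -> 0 < c -> golden (s ^ 2) (c ^ 2) ->
  (c / (2 * s) = cos (PI / 5) /\ (s ^ 2 + s ^ 2 - c ^ 2) / (2 * s * s) = cos (3 * PI / 5)) \/
  (c / (2 * s) = cos (2 * PI / 5) /\ (s ^ 2 + s ^ 2 - c ^ 2) / (2 * s * s) = cos (PI / 5)).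
Proof.
  unfold golden; intros Hs Hc Hg; pose proof pow2_sqrt5 as H5; pose proof sqrt5_gt2 as H5gt.
  rewrite cos_PI5, cos_2PI5, cos_3PI5.
  assert (Hfact : (c - s * (1 + sqrt 5) / 2) * (c - s * (sqrt 5 - 1) / 2)
                  * ((c + s * (1 + sqrt 5) / 2) * (c + s * (sqrt 5 - 1) / 2)) = 0) by nra.
  destruct (Rmult_integral _ _ Hfact) as [H|H].
  - destruct (Rmult_integral _ _ H) as [Hphi|Hphi]; [left|right];
      replace c with (c - 0) by ring; rewrite <- Hphi; split; field_simplify;
      rewrite ?pow2_sqrt5; try field; lra.
  - exfalso; destruct (Rmult_integral _ _ H); nra.
Qed.

Lemma golden_isosceles_type (X Y Z : point) :
  dist X Y = dist X Z -> 0 < dist X Y -> 0 < dist Y Z ->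
  golden (dist X Y ^ 2) (dist Y Z ^ 2) ->
  is_type X Y Z 108 36 36 \/ is_type X Y Z 72 72 36.
Proof.
  intros Hiso Hs Hc Hg.
  set (s := dist X Y) in *; set (c := dist Y Z) in *.
  assert (HYX : dist Y X = s) by apply dist_sym.
  assert (HZX : dist Z X = s) by (rewrite dist_sym; auto).
  assert (HZY : dist Z Y = c) by apply dist_sym.
  assert (Apex : forall t, (s ^ 2 + s ^ 2 - c ^ 2) / (2 * s * s) = cos (t * PI / 180) ->
            0 <= t <= 180 -> angle_deg X Y Z = t)
    by (intros; apply angle_deg_eq; rewrite <- ?Hiso; auto).
  assert (Base : forall t, c / (2 * s) = cos (t * PI / 180) -> 0 <= t <= 180 ->
            angle_deg Y Z X = t /\ angle_deg Z X Y = t).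
  { intros t Ht Ht'; split; apply angle_deg_eq; fold s c; rewrite ?HYX, ?HZX, ?HZY;
      try lra; rewrite <- Ht; field; lra. }
  destruct (golden_cosines s c Hs Hc Hg) as [[Hb Ha]|[Hb Ha]]; [left|right]; unfold is_type.
  - destruct (Base 36) as [-> ->]; [rewrite Hb; f_equal; field | lra |].
    rewrite (Apex 108); [left; repeat split | rewrite Ha; f_equal; field | lra].
  - destruct (Base 72) as [-> ->]; [rewrite Hb; f_equal; field | lra |].
    rewrite (Apex 36); [do 4 right; left; repeat split | rewrite Ha; f_equal; field | lra].
Qed.

Lemma is_type_rotate (A B C : point) (al be ga : R) :
  is_type B C A al be ga -> is_type A B C al be ga.
Proof. unfold is_type; tauto. Qed.

Lemma sides_not_golden (TA TB TC : point) : noncollinear TA TB TC ->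
  ~ is_type TA TB TC 108 36 36 -> ~ is_type TA TB TC 72 72 36 ->
  let x := dist TB TC ^ 2 in let y := dist TC TA ^ 2 in let z := dist TA TB ^ 2 in
  (x = y -> ~ golden x z) /\ (y = z -> ~ golden y x) /\ (x = z -> ~ golden x y).
Proof.
  intros Hnc H108 H72 x y z.
  destruct (noncollinear_sides_gt0 _ _ _ Hnc) as [Hc [Ha Hb]].
  assert (Hsq : forall u v, 0 < u -> 0 < v -> u ^ 2 = v ^ 2 -> u = v)
    by (intros u v Hu Hv Huv; apply Rsqr_inj; try lra; rewrite !Rsqr_pow2; exact Huv).
  assert (Hapex : forall X Y Z,
    (forall al be ga, is_type X Y Z al be ga -> is_type TA TB TC al be ga) ->
    dist X Y = dist X Z -> 0 < dist X Y -> 0 < dist Y Z ->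
    ~ golden (dist X Y ^ 2) (dist Y Z ^ 2)).
  { intros X Y Z Hrot Hiso HXY HYZ Hg.
    destruct (golden_isosceles_type X Y Z Hiso HXY HYZ Hg); auto. }
  unfold x, y, z; repeat split; intros Hsides; apply Hsq in Hsides; auto.
  - rewrite Hsides; apply (Hapex TC TA TB); auto.
    + intros; now do 2 apply is_type_rotate.
    + rewrite (dist_sym TC TB); congruence.
  - rewrite Hsides; apply (Hapex TA TB TC); auto.
    rewrite (dist_sym TA TC); congruence.
  - apply (Hapex TB TC TA); auto.
    + intros; now apply is_type_rotate.
    + rewrite (dist_sym TB TA); congruence.
Qed.

Theorem lemma2p10 (TA TB TC : point) :
  noncollinear TA TB TC ->
  ~ is_type TA TB TC 108 36 36 ->
  ~ is_type TA TB TC 72 72 36 ->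
  ~ is_type TA TB TC 120 30 30 ->
  forbidden TA TB TC C5.
Proof.
  (* Only the golden types obstruct the argument; type (120,30,30) needs no exclusion. *)
  intros Hnc H108 H72 _.
  destruct (noncollinear_sides_gt0 _ _ _ Hnc) as [Hc [Ha Hb]].
  destruct (sides_not_golden _ _ _ Hnc H108 H72) as [G1 [G2 G3]].
  destruct (cm_sum_lower_bound (dist TB TC ^ 2) (dist TC TA ^ 2) (dist TA TB ^ 2))
    as [k [Hk Hlow]]; auto using pow_lt.
  destruct (exists_separation (dist TB TC) (dist TC TA) (dist TA TB)) as [g [Hg Hsep]].
  set (S := dist TB TC + dist TC TA + dist TA TB + 1).
  destruct (exists_small_tolerance (Rmin g 1) (5 * (132 * S ^ 5) ^ 2) k) as [e [He [Heg Hek]]];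
    [apply Rmin_glb_lt; lra | nra | exact Hk |].
  pose proof (Rle_trans _ _ _ Heg (Rmin_l g 1)) as He_g.
  pose proof (Rle_trans _ _ _ Heg (Rmin_r g 1)) as He1.
  assert (Hm : 0 < min_side TA TB TC) by (repeat apply Rmin_glb_lt; assumption).
  exists (e / (2 * min_side TA TB TC)); split; [apply Rdiv_lt_0_compat; lra|].
  intros P _ _ [f [_ [_ Hedges]]].
  destruct (C5_copy_labelling TA TB TC (e / (2 * min_side TA TB TC)) e f) as [v [Hv Hclose]];
    [field; lra | auto | exact Hedges |].
  pose proof (Hlow _ (c5_labelling_map (fun t => t ^ 2) _ _ _ _ Hv)) as Hfar.
  pose proof (cm_sum_near_planar f v e S
    (approx_labels_intro f v _ _ _ e (Rlt_le _ _ Ha) (Rlt_le _ _ Hb) (Rlt_le _ _ Hc) He1 Hclose))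
    as Hnear.
  cbv beta in Hfar; lra.
Qed.
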